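(* Fix a formula $A$. For all annotated unary contexts $\Gamma\{-\}$, $\Delta\{-\}$ and every finite set of formulas $\Sigma$: if $\vdash^A \Gamma\{\Delta\{\Diamond A^\perp_\Sigma\}\}$, then $\vdash^A \Gamma\{\Delta\{\},\Diamond A^\perp_\Sigma\}$.
   Context: Formulas: over a countable set of atoms $\alpha$ with duals $\alpha^\perp$, $A,B ::= \alpha \mid \alpha^\perp \mid A\land B \mid A\lor B \mid \Box A \mid \Diamond A$; negation $A^\perp$ by De Morgan duality ($(\alpha)^\perp=\alpha^\perp$, $(\alpha^\perp)^\perp=\alpha$, $\land/\lor$ dual, $(\Box A)^\perp=\Diamond A^\perp$, $(\Diamond A)^\perp=\Box A^\perp$). Annotated sequents: $\Gamma,\Delta ::= \cdot \mid \Gamma, C \mid \Gamma, \Diamond A_\Sigma \mid \Gamma,[\Delta]_B$, where $C$ is a formula not of the form $\Diamond A$, $\Sigma$ is a finite set of formulas (annotation set) and $B$ a formula (bracket annotation); sequents are taken up to exchange. Annotated unary contexts $\Gamma\{-\}$ (one hole) are defined analogously, $\Gamma\{\Delta\}$ is hole-filling, $\Gamma\{\}=\Gamma\{\cdot\}$. Annotated rules (whenever an active formula in a premise is a $\Diamond$-formula, its annotation is simply discarded): (id) $\Gamma\{\alpha^\perp,\alpha\}$, provided every $\Diamond$-formula occurrence in it has annotation $\emptyset$; ($\land$) from $\Gamma_1\{A\}$ and $\Gamma_2\{B\}$ infer $\Gamma\{A\land B\}$; ($\lor$) from $\Gamma\{A,B\}$ infer $\Gamma\{A\lor B\}$; ($\Box$)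 from $\Gamma\{[\Diamond A^\perp_\Sigma, A]_A\}$ infer $\Gamma\{\Box A\}$; ($\Diamond$) from $\Gamma\{\Delta\{[\Delta',A]_B\},\Diamond A_\Sigma\}$ infer $\Gamma\{\Delta\{[\Delta']_B\},\Diamond A_{\Sigma\cup\{B\}}\}$ (for any unary context $\Delta\{-\}$, possibly of depth $0$); (cut) from $\Gamma_1\{A\}$ and $\Gamma_2\{A^\perp\}$ infer $\Gamma\{\}$. In the two-premise rules, $\Gamma_1\{-\},\Gamma_2\{-\},\Gamma\{-\}$ are identical except for annotation sets of $\Diamond$-formula occurrences (bracket annotations coincide), and each $\Diamond$-formula occurrence in $\Gamma\{-\}$ has as annotation the union of the annotations of the corresponding occurrences in $\Gamma_1,\Gamma_2$. Fix a formula $A$; $\vdash^A\Gamma$ means the annotated sequent $\Gamma$ is derivable with the annotated rules (id), ($\land$), ($\lor$), ($\Box$), ($\Diamond$) together with those instances of (cut) whose cut formula is $A$ (premises $\Gamma_1\{A\}$, $\Gamma_2\{A^\perp\}$). Convention: annotations not displayed in a statement (on $\Diamond$-formulas or brackets of contexts) are arbitrary; bracket annotations are the same in hypothesis and conclusion, while undisplayed $\Diamond$-annotations in the conclusion are existentially quantified. *)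

From HB Require Import structures.
From mathcomp Require Import all_boot.
From mathcomp Require Import finmap.
From Stdlib Require Permutation.

Set Implicit Arguments.
Unset Strict Implicit.
Unset Printing Implicit Defensive.

Local Open Scope fset_scope.

Inductive form : Type :=
| Atom of nat
| NAtom of nat
| And of form & form
| Or of form & form
| Box of form
| Dia of form.

Fixpoint neg (f : form) : form :=
  match f with
  | Atom n => NAtom n
  | NAtom n => Atom n
  | And a b => Or (neg a) (neg b)
  | Or a b => And (neg a) (neg b)
  | Box a => Dia (neg a)
  | Dia a => Box (neg a)
  end.

Definition is_dia (f : form) : bool := if f is Dia _ then true else false.

(* countable (hence choice) structure on formulas, to form {fset form} *)
Fixpoint enc_form (f : form) : GenTree.tree nat :=
  match f with
  | Atom n => GenTree.Node 0 [:: GenTree.Leaf n]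
  | NAtom n => GenTree.Node 1 [:: GenTree.Leaf n]
  | And a b => GenTree.Node 2 [:: enc_form a; enc_form b]
  | Or a b => GenTree.Node 3 [:: enc_form a; enc_form b]
  | Box a => GenTree.Node 4 [:: enc_form a]
  | Dia a => GenTree.Node 5 [:: enc_form a]
  end.

Fixpoint dec_form (t : GenTree.tree nat) : option form :=
  match t with
  | GenTree.Node 0 [:: GenTree.Leaf n] => Some (Atom n)
  | GenTree.Node 1 [:: GenTree.Leaf n] => Some (NAtom n)
  | GenTree.Node 2 [:: a; b] =>
      match dec_form a, dec_form b with
      | Some x, Some y => Some (And x y) | _, _ => None end
  | GenTree.Node 3 [:: a; b] =>
      match dec_form a, dec_form b with
      | Some x, Some y => Some (Or x y) | _, _ => None end
  | GenTree.Node 4 [:: a] =>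
      match dec_form a with Some x => Some (Box x) | None => None end
  | GenTree.Node 5 [:: a] =>
      match dec_form a with Some x => Some (Dia x) | None => None end
  | _ => None
  end.

Lemma enc_formK : pcancel enc_form dec_form.
Proof. by elim=> //= [a -> b ->|a -> b ->|a ->|a ->]. Qed.

HB.instance Definition _ := Countable.copy form (pcan_type enc_formK).

(* Annotated sequents.  An item is a formula C that is not a diamond    *)
(* formula, a diamond formula <>A with annotation set Sigma, or a       *)
(* bracket [Delta]_B.  A sequent is a list of items; sequents are taken *)
(* up to exchange via the (deep) exchange rule of [deriv] below.        *)
Inductive item : Type :=
| IForm (C : form) of ~~ is_dia C
| IDia of form & {fset form}
| IBr of list item & form.

Notation sequent := (list item).

(* unary contexts: [Hole G] is  G, {-}  and  [CBr G c B] is  G, [c]_B  *)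
Inductive ctx : Type :=
| Hole of sequent
| CBr of sequent & ctx & form.

Fixpoint fill (c : ctx) (D : sequent) : sequent :=
  match c with
  | Hole G => G ++ D
  | CBr G c' B => G ++ [:: IBr (fill c' D) B]
  end.

Definition fitem (A : form) (S : {fset form}) : item :=
  match A with
  | Atom n => @IForm (Atom n) isT
  | NAtom n => @IForm (NAtom n) isT
  | And a b => @IForm (And a b) isT
  | Or a b => @IForm (Or a b) isT
  | Box a => @IForm (Box a) isT
  | Dia a => IDia a S
  end.

Inductive empty_item : item -> Prop :=
| EForm C p : empty_item (@IForm C p)
| EDia A : empty_item (IDia A fset0)
| EBr D B : empty_list D -> empty_item (IBr D B)
with empty_list : sequent -> Prop :=
| ENil : empty_list [::]
| ECons i D : empty_item i -> empty_list D -> empty_list (i :: D).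

Inductive empty_ctx : ctx -> Prop :=
| EHole G : empty_list G -> empty_ctx (Hole G)
| ECBr G c B : empty_list G -> empty_ctx c -> empty_ctx (CBr G c B).

Inductive merge_item : item -> item -> item -> Prop :=
| MForm C p : merge_item (@IForm C p) (@IForm C p) (@IForm C p)
| MDia A S T : merge_item (IDia A S) (IDia A T) (IDia A (S `|` T))
| MBr D1 D2 D B : merge_list D1 D2 D -> merge_item (IBr D1 B) (IBr D2 B) (IBr D B)
with merge_list : sequent -> sequent -> sequent -> Prop :=
| MNil : merge_list [::] [::] [::]
| MCons i1 i2 i D1 D2 D : merge_item i1 i2 i -> merge_list D1 D2 D ->
    merge_list (i1 :: D1) (i2 :: D2) (i :: D).

Inductive merge_ctx : ctx -> ctx -> ctx -> Prop :=
| MHole G1 G2 G : merge_list G1 G2 G -> merge_ctx (Hole G1) (Hole G2) (Hole G)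
| MCBr G1 G2 G c1 c2 c B : merge_list G1 G2 G -> merge_ctx c1 c2 c ->
    merge_ctx (CBr G1 c1 B) (CBr G2 c2 B) (CBr G c B).

Inductive sim_item : item -> item -> Prop :=
| SForm C p : sim_item (@IForm C p) (@IForm C p)
| SDia A S T : sim_item (IDia A S) (IDia A T)
| SBr D1 D2 B : sim_list D1 D2 -> sim_item (IBr D1 B) (IBr D2 B)
with sim_list : sequent -> sequent -> Prop :=
| SNil : sim_list [::] [::]
| SCons i1 i2 D1 D2 : sim_item i1 i2 -> sim_list D1 D2 ->
    sim_list (i1 :: D1) (i2 :: D2).

Inductive sim_ctx : ctx -> ctx -> Prop :=
| SHole G1 G2 : sim_list G1 G2 -> sim_ctx (Hole G1) (Hole G2)
| SCBr G1 G2 c1 c2 B : sim_list G1 G2 -> sim_ctx c1 c2 ->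
    sim_ctx (CBr G1 c1 B) (CBr G2 c2 B).

(* |-^cf G : derivability with the annotated rules, cuts only on cf.    *)
Inductive deriv (cf : form) : sequent -> Prop :=
| R_exch G D D' :
    deriv cf (fill G D) -> Permutation.Permutation D D' -> deriv cf (fill G D')
| R_id G n :
    empty_ctx G ->
    deriv cf (fill G [:: @IForm (NAtom n) isT; @IForm (Atom n) isT])
| R_and G1 G2 G A B S1 S2 :
    merge_ctx G1 G2 G ->
    deriv cf (fill G1 [:: fitem A S1]) -> deriv cf (fill G2 [:: fitem B S2]) ->
    deriv cf (fill G [:: @IForm (And A B) isT])
| R_or G A B S1 S2 :
    deriv cf (fill G [:: fitem A S1; fitem B S2]) ->
    deriv cf (fill G [:: @IForm (Or A B) isT])
| R_box G A S S' :
    deriv cf (fill G [:: IBr [:: IDia (neg A) S; fitem A S'] A]) ->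
    deriv cf (fill G [:: @IForm (Box A) isT])
| R_dia G D D' A B S S' :
    deriv cf (fill G (rcons (fill D [:: IBr (rcons D' (fitem A S')) B]) (IDia A S))) ->
    deriv cf (fill G (rcons (fill D [:: IBr D' B]) (IDia A (S `|` [fset B]))))
| R_cut G1 G2 G S1 S2 :
    merge_ctx G1 G2 G ->
    deriv cf (fill G1 [:: fitem cf S1]) -> deriv cf (fill G2 [:: fitem (neg cf) S2]) ->
    deriv cf (fill G [::]).

From mathcomp Require Import all_boot finmap.
From Stdlib Require Import Permutation.

Set Implicit Arguments.
Unset Strict Implicit.

Local Open Scope fset_scope.

(* Moving a diamond formula <>a_T out of the bracket that immediately contains
   it, next to that bracket, preserves derivability, whatever a and T are.
   The proof is by induction on the derivation: such a move commutes with every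
   rule, the annotation T splitting as T1 `|` T2 over the premises of a
   two-premise rule.  When the moved formula is the principal formula of an
   application of (<>), that rule is applied one level higher instead, its
   context Delta enlarged by the level the formula has left.  The theorem then
   follows by moving <>A^perp_Sigma out of Delta one bracket at a time. *)

Lemma cat_eq_cat_cons (T : Type) (l1 l2 m1 m2 : seq T) (a : T) :
  l1 ++ l2 = m1 ++ a :: m2 ->
  (exists k, l1 = m1 ++ a :: k /\ m2 = k ++ l2) \/
  (exists k, l2 = k ++ a :: m2 /\ m1 = l1 ++ k).
Proof.
elim: l1 m1 => [|x l1 IH] m1 /=; first by move=> ->; right; exists m1.
case: m1 => [|y m1] /= [<-]; first by left; exists l1.
by case/IH=> -[k [-> ->]]; [left|right]; exists k.
Qed.
Arguments cat_eq_cat_cons {T l1 l2 m1 m2 a}.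

Lemma cat_cons_eq_seq1 (T : Type) (l r : seq T) (x y : T) :
  l ++ x :: r = [:: y] -> [/\ l = [::], r = [::] & x = y].
Proof. by case: l => [|? [|? ?]] //= [-> ->]. Qed.
Arguments cat_cons_eq_seq1 {T l r x y}.

Lemma Permutation_cat_cons_inv (T : Type) (D P1 P2 : seq T) (x : T) :
  Permutation D (P1 ++ x :: P2) ->
  exists Q1 Q2, D = Q1 ++ x :: Q2 /\ Permutation (Q1 ++ Q2) (P1 ++ P2).
Proof.
move=> HD; have [Q1 [Q2 ED]] := Permutation_vs_elt_inv _ _ _ HD.
have {}ED : D = Q1 ++ x :: Q2 := ED.
by exists Q1, Q2; split=> //; move: HD; rewrite ED; apply: Permutation_app_inv.
Qed.

Lemma Permutation_rcons_swap (T : Type) (Y : seq T) (x y : T) :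
  Permutation (rcons (rcons Y x) y) (rcons (rcons Y y) x).
Proof. by rewrite -!cats1 -!catA; apply: Permutation_app_head; apply: perm_swap. Qed.

Fixpoint ctx_comp (K c : ctx) : ctx :=
  match K, c with
  | Hole Y, Hole Y0 => Hole (Y ++ Y0)
  | Hole Y, CBr Y0 c0 B => CBr (Y ++ Y0) c0 B
  | CBr Y k B, _ => CBr Y (ctx_comp k c) B
  end.
Arguments ctx_comp K c : simpl nomatch.

Lemma fill_ctx_comp K c X : fill (ctx_comp K c) X = fill K (fill c X).
Proof. by elim: K => [Y|Y k IH B] /=; [case: c => *; rewrite /= catA|rewrite IH]. Qed.

Lemma fill_br_ctx_comp K Y Z B :
  fill K (Y ++ [:: IBr Z B]) = fill (ctx_comp K (CBr Y (Hole [::]) B)) Z.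
Proof. by rewrite fill_ctx_comp. Qed.

Definition formula_item (i : item) : bool := if i is IForm _ _ then true else false.

Section Lift.

Variables (a : form) (T : {fset form}).
Local Notation dia := (IDia a T).

Inductive dia_lift : sequent -> sequent -> Prop :=
| dia_lift_here l r W1 W2 B :
    dia_lift (l ++ IBr (W1 ++ dia :: W2) B :: r) (l ++ dia :: IBr (W1 ++ W2) B :: r)
| dia_lift_deep l r W W' B :
    dia_lift W W' -> dia_lift (l ++ IBr W B :: r) (l ++ IBr W' B :: r).

Inductive ctx_dia_drop : ctx -> ctx -> Prop :=
| ctx_dia_drop_hole Y1 Y2 : ctx_dia_drop (Hole (Y1 ++ dia :: Y2)) (Hole (Y1 ++ Y2))
| ctx_dia_drop_br Y1 Y2 c B :
    ctx_dia_drop (CBr (Y1 ++ dia :: Y2) c B) (CBr (Y1 ++ Y2) c B).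

Inductive ctx_dia_lift : ctx -> ctx -> Prop :=
| ctx_dia_lift_hole Y Y' : dia_lift Y Y' -> ctx_dia_lift (Hole Y) (Hole Y')
| ctx_dia_lift_top Y Y' c B : dia_lift Y Y' -> ctx_dia_lift (CBr Y c B) (CBr Y' c B)
| ctx_dia_lift_deep Y c c' B : ctx_dia_lift c c' -> ctx_dia_lift (CBr Y c B) (CBr Y c' B)
| ctx_dia_lift_out Y c c' B :
    ctx_dia_drop c c' -> ctx_dia_lift (CBr Y c B) (CBr (Y ++ [:: dia]) c' B).

Inductive ctx_dia_raise : ctx -> ctx -> Prop :=
| ctx_dia_raise_here Y Y' B :
    ctx_dia_raise (CBr Y (Hole Y') B) (CBr (Y ++ [:: dia]) (Hole Y') B)
| ctx_dia_raise_deep Y c c' B : ctx_dia_raise c c' -> ctx_dia_raise (CBr Y c B) (CBr Y c' B).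

Lemma dia_lift_catr Y Y' Z : dia_lift Y Y' -> dia_lift (Y ++ Z) (Y' ++ Z).
Proof. by case=> *; rewrite -!catA /=; constructor. Qed.

Lemma dia_lift_catl Y Y' Z : dia_lift Y Y' -> dia_lift (Z ++ Y) (Z ++ Y').
Proof. by case=> *; rewrite !catA; constructor. Qed.

Lemma dia_lift_rcons Y Y' x : dia_lift Y Y' -> dia_lift (rcons Y x) (rcons Y' x).
Proof. by rewrite -!cats1; apply: dia_lift_catr. Qed.

Lemma dia_lift_fill G Y Y' : dia_lift Y Y' -> dia_lift (fill G Y) (fill G Y').
Proof.
move=> HY; elim: G => [X|X c IH B] /=; first exact: dia_lift_catl.
exact: (dia_lift_deep X [::]).
Qed.

Lemma dia_lift_split Y Y' : dia_lift Y Y' -> exists l W B r, Y = l ++ IBr W B :: r.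
Proof. by case=> *; do 4 eexists. Qed.

Lemma dia_lift_flat Y Y' : all formula_item Y -> ~ dia_lift Y Y'.
Proof. by move=> HY /dia_lift_split [l [W [B [r EY]]]]; rewrite EY all_cat andbF in HY. Qed.

Lemma ctx_dia_drop_fill c c' Z : ctx_dia_drop c c' ->
  exists W1 W2, fill c Z = W1 ++ dia :: W2 /\ fill c' Z = W1 ++ W2.
Proof.
case=> [Y1 Y2|Y1 Y2 c0 B] /=; first by exists Y1, (Y2 ++ Z); rewrite -!catA.
by exists Y1, (Y2 ++ [:: IBr (fill c0 Z) B]); rewrite -!catA.
Qed.

Lemma dia_lift_ctx G G' Z : ctx_dia_lift G G' -> dia_lift (fill G Z) (fill G' Z).
Proof.
elim=> [Y Y' HY|Y Y' c B HY|Y c c' B _ IH|Y c c' B Hc] /=; try exact: dia_lift_catr.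
  exact: (dia_lift_deep Y [::]).
have [W1 [W2 [-> ->]]] := ctx_dia_drop_fill Z Hc.
by rewrite -catA; apply: (dia_lift_here Y [::]).
Qed.

Lemma dia_lift_raise G G' Z1 Z2 : ctx_dia_raise G G' ->
  dia_lift (fill G (Z1 ++ dia :: Z2)) (fill G' (Z1 ++ Z2)).
Proof.
elim=> [Y Y' B|Y c c' B _ IH] /=; last exact: (dia_lift_deep Y [::]).
by rewrite -catA /= !catA; apply: (dia_lift_here Y [::]).
Qed.

Lemma dia_lift_cat_inv Y P t : dia_lift (Y ++ P) t ->
  (exists2 Y', dia_lift Y Y' & t = Y' ++ P) \/ (exists2 P', dia_lift P P' & t = Y ++ P').
Proof.
move EYP: (Y ++ P) => s H; case: H EYP => [l r W1 W2 B|l r W W' B HW];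
  move=> E; case: (cat_eq_cat_cons E) => -[k [-> ->]].
- by left; exists (l ++ dia :: IBr (W1 ++ W2) B :: k); [exact: dia_lift_here|rewrite -catA].
- by right; exists (k ++ dia :: IBr (W1 ++ W2) B :: r); [exact: dia_lift_here|rewrite -catA].
- by left; exists (l ++ IBr W' B :: k); [exact: dia_lift_deep|rewrite -catA].
- by right; exists (k ++ IBr W' B :: r); [exact: dia_lift_deep|rewrite -catA].
Qed.

Lemma dia_lift_seq1_br W B P : dia_lift [:: IBr W B] P ->
  (exists W1 W2, W = W1 ++ dia :: W2 /\ P = [:: dia; IBr (W1 ++ W2) B]) \/
  (exists2 W', dia_lift W W' & P = [:: IBr W' B]).
Proof.
move EW: [:: IBr W B] => s H; case: H EW => [l r W1 W2 B'|l r W0 W' B' HW];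
  move=> /esym E; case: (cat_cons_eq_seq1 E) => -> -> [<- <-];
  by [left; exists W1, W2|right; exists W'].
Qed.

Lemma dia_lift_fill_inv G P t : dia_lift (fill G P) t ->
  [\/ exists2 G', ctx_dia_lift G G' & t = fill G' P,
      exists2 P', dia_lift P P' & t = fill G P'
    | exists G' P1 P2, [/\ ctx_dia_raise G G', P = P1 ++ dia :: P2 & t = fill G' (P1 ++ P2)]].
Proof.
elim: G t => [Y|Y c IH B] t /= /dia_lift_cat_inv [[Y' HY ->]|[P' HP ->]].
- by apply: Or31; exists (Hole Y'); first exact: ctx_dia_lift_hole.
- by apply: Or32; exists P'.
- by apply: Or31; exists (CBr Y' c B); first exact: ctx_dia_lift_top.
case/dia_lift_seq1_br: HP =>
  [[W1 [W2 [Ec ->]]]|[W' /IH[[c' Hc ->]|[P'' HP ->]|[c' [P1 [P2 [Hc -> ->]]]]] ->]].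
- case: c {IH} Ec => [Y''|Y'' c0 B0] /= /cat_eq_cat_cons [[k [-> ->]]|[k [Ek ->]]].
  + apply: Or31; exists (CBr (Y ++ [:: dia]) (Hole (W1 ++ k)) B).
      exact/ctx_dia_lift_out/ctx_dia_drop_hole.
    by rewrite /= -!catA.
  + apply: Or33; exists (CBr (Y ++ [:: dia]) (Hole Y'') B), k, W2.
    by split=> //; [apply: ctx_dia_raise_here|rewrite /= -!catA].
  + apply: Or31; exists (CBr (Y ++ [:: dia]) (CBr (W1 ++ k) c0 B0) B).
      exact/ctx_dia_lift_out/ctx_dia_drop_br.
    by rewrite /= -!catA.
  + by case: (cat_cons_eq_seq1 (esym Ek)).
- by apply: Or31; exists (CBr Y c' B); first exact: ctx_dia_lift_deep.
- by apply: Or32; exists P''.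
- apply: Or33; exists (CBr Y c' B), P1, P2.
  by split=> //; apply: ctx_dia_raise_deep.
Qed.

Lemma dia_lift_rcons_dia_inv X A S P : dia_lift (rcons X (IDia A S)) P ->
  exists2 X', dia_lift X X' & P = rcons X' (IDia A S).
Proof.
rewrite -cats1 => /dia_lift_cat_inv [[X' HX ->]|[P' /dia_lift_split [l [W [B [r E]]]] _]].
  by exists X'; rewrite ?cats1.
by case: l E => [|? []].
Qed.

Lemma dia_lift_fill_flat G P t : all formula_item P -> dia_lift (fill G P) t ->
  exists2 G', ctx_dia_lift G G' & t = fill G' P.
Proof.
move=> HP /dia_lift_fill_inv [//|[P' /(dia_lift_flat HP)]//|[G' [P1 [P2 [_ EP _]]]]].
by rewrite EP all_cat /= andbF in HP.
Qed.

Lemma dia_lift_fill_br_inv D W B t : dia_lift (fill D [:: IBr W B]) t ->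
  exists D2 W2, t = fill D2 [:: IBr W2 B] /\
    forall x, dia_lift (fill D [:: IBr (rcons W x) B]) (fill D2 [:: IBr (rcons W2 x) B]).
Proof.
case/dia_lift_fill_inv=> [[D2 HD ->]|[P' /dia_lift_seq1_br HP ->]|[D2 [P1 [P2 [_ EP _]]]]].
- by exists D2, W; split=> // x; apply: dia_lift_ctx.
- case: HP => [[W1 [W2 [-> ->]]]|[W' HW ->]].
    exists (ctx_comp D (Hole [:: dia])), (W1 ++ W2); split; first by rewrite fill_ctx_comp.
    move=> x; rewrite fill_ctx_comp /= !rcons_cat /=.
    exact/dia_lift_fill/(dia_lift_here [::] [::]).
  by exists D, W'; split=> // x; apply/dia_lift_fill/(dia_lift_deep [::] [::])/dia_lift_rcons.
- by case: (cat_cons_eq_seq1 (esym EP)).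
Qed.

Lemma fill_br_eq_cat_dia D W B P1 P2 : fill D [:: IBr W B] = P1 ++ dia :: P2 ->
  exists2 D', ctx_dia_drop D D' & fill D' [:: IBr W B] = P1 ++ P2.
Proof.
case: D => [Y|Y c B'] /= /cat_eq_cat_cons [[k [-> ->]]|[k [Ek _]]].
- by exists (Hole (P1 ++ k)); [exact: ctx_dia_drop_hole|rewrite /= -catA].
- by case: (cat_cons_eq_seq1 (esym Ek)).
- by exists (CBr (P1 ++ k) c B'); [exact: ctx_dia_drop_br|rewrite /= -catA].
- by case: (cat_cons_eq_seq1 (esym Ek)).
Qed.

Lemma dia_lift_perm D D' P' : Permutation D D' -> dia_lift D' P' ->
  exists2 D0, dia_lift D D0 & Permutation D0 P'.
Proof.
move=> HD H; case: H HD => [l r W1 W2 B|l r W W' B HW] HD;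
  have [Q1 [Q2 [-> HQ]]] := Permutation_cat_cons_inv HD.
- exists (Q1 ++ dia :: IBr (W1 ++ W2) B :: Q2); first exact: dia_lift_here.
  by do 2!apply: Permutation_elt.
- by exists (Q1 ++ IBr W' B :: Q2); [exact: dia_lift_deep|apply: Permutation_elt].
Qed.

End Lift.

Lemma ctx_dia_raise_reannotate a T T' G G' :
  ctx_dia_raise a T G G' -> exists G'', ctx_dia_raise a T' G G''.
Proof.
elim=> [Y Y' B|Y c c' B _ [c'' H]]; eexists;
  [apply: ctx_dia_raise_here|apply: ctx_dia_raise_deep H].
Qed.

Lemma empty_list_cons i D : empty_list (i :: D) <-> empty_item i /\ empty_list D.
Proof. by split=> [H|[]]; [inversion H|apply: ECons]. Qed.

Lemma empty_list_cat l r : empty_list (l ++ r) <-> empty_list l /\ empty_list r.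
Proof.
elim: l => [|x l IH] /=; first by split=> [|[]//]; split=> //; apply: ENil.
split=> [/empty_list_cons [Hx /IH [Hl Hr]]|[/empty_list_cons [Hx Hl] Hr]].
  by split=> //; apply/empty_list_cons.
by apply/empty_list_cons; split=> //; apply/IH.
Qed.

Lemma empty_item_br D B : empty_item (IBr D B) <-> empty_list D.
Proof. by split=> [H|]; [inversion H|apply: EBr]. Qed.

Lemma empty_ctx_fill G : empty_ctx G <-> empty_list (fill G [::]).
Proof.
elim: G => [Y|Y c IH B] /=; rewrite ?cats0.
  by split=> [H|]; [inversion H|apply: EHole].
split=> [H|/empty_list_cat [HY /empty_list_cons [/empty_item_br /IH Hc _]]].
  inversion H; apply/empty_list_cat; split=> //.
  by apply/empty_list_cons; split; [apply/empty_item_br/IH|apply: ENil].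
exact: ECBr.
Qed.

Lemma dia_lift_empty a T M M' : dia_lift a T M M' -> empty_list M -> empty_list M'.
Proof.
elim=> [l r W1 W2 B|l r W W' B _ IH]
  /empty_list_cat [Hl /empty_list_cons [/empty_item_br HW Hr]];
  apply/empty_list_cat; split=> //.
  case/empty_list_cat: HW => HW1 /empty_list_cons [Hd HW2].
  apply/empty_list_cons; split=> //; apply/empty_list_cons; split=> //.
  by apply/empty_item_br/empty_list_cat.
by apply/empty_list_cons; split=> //; apply/empty_item_br/IH.
Qed.

Lemma ctx_dia_lift_empty a T G G' : ctx_dia_lift a T G G' -> empty_ctx G -> empty_ctx G'.
Proof.
by move=> HG /empty_ctx_fill HE; apply/empty_ctx_fill/(dia_lift_empty (dia_lift_ctx _ HG)).
Qed.

Lemma merge_list_cat l1 l2 l r1 r2 r : merge_list l1 l2 l -> merge_list r1 r2 r ->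
  merge_list (l1 ++ r1) (l2 ++ r2) (l ++ r).
Proof. by elim=> //= i1 i2 i D1 D2 D Hi _ IH Hr; apply: MCons => //; apply: IH. Qed.

Lemma merge_list_cat_cons_inv M1 M2 l i r : merge_list M1 M2 (l ++ i :: r) ->
  exists l1 i1 r1 l2 i2 r2, [/\ M1 = l1 ++ i1 :: r1, M2 = l2 ++ i2 :: r2,
    merge_list l1 l2 l, merge_item i1 i2 i & merge_list r1 r2 r].
Proof.
elim: l M1 M2 => [|x l IH] M1 M2 /= H;
  inversion H as [|i1 i2 x' D1 D2 D' Hi HD]; subst.
  by exists [::], i1, D1, [::], i2, D2; split=> //; apply: MNil.
have [l1 [j1 [r1 [l2 [j2 [r2 [-> -> Hl Hj Hr]]]]]]] := IH _ _ HD.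
by exists (i1 :: l1), j1, r1, (i2 :: l2), j2, r2; split=> //; apply: MCons.
Qed.

Lemma merge_item_br_inv i1 i2 D B : merge_item i1 i2 (IBr D B) ->
  exists D1 D2, [/\ i1 = IBr D1 B, i2 = IBr D2 B & merge_list D1 D2 D].
Proof. by move=> H; inversion H as [ | | D1 D2 D' B' HD]; exists D1, D2. Qed.

Lemma merge_item_dia_inv i1 i2 a T : merge_item i1 i2 (IDia a T) ->
  exists T1 T2, [/\ i1 = IDia a T1, i2 = IDia a T2 & T = T1 `|` T2].
Proof. by move=> H; inversion H as [|a' T1 T2|]; exists T1, T2. Qed.

Lemma merge_ctx_hole_inv G1 G2 Y : merge_ctx G1 G2 (Hole Y) ->
  exists Y1 Y2, [/\ G1 = Hole Y1, G2 = Hole Y2 & merge_list Y1 Y2 Y].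
Proof. by move=> H; inversion H as [Y1 Y2 Y' HY|]; exists Y1, Y2. Qed.

Lemma merge_ctx_br_inv G1 G2 Y c B : merge_ctx G1 G2 (CBr Y c B) ->
  exists Y1 Y2 c1 c2,
    [/\ G1 = CBr Y1 c1 B, G2 = CBr Y2 c2 B, merge_list Y1 Y2 Y & merge_ctx c1 c2 c].
Proof. by move=> H; inversion H as [|Y1 Y2 Y' c1 c2 c' B' HY Hc]; exists Y1, Y2, c1, c2. Qed.

Lemma dia_lift_merge a T M M' M1 M2 : dia_lift a T M M' -> merge_list M1 M2 M ->
  exists T1 T2 M1' M2',
    [/\ dia_lift a T1 M1 M1', dia_lift a T2 M2 M2' & merge_list M1' M2' M'].
Proof.
move=> H; elim: H M1 M2 => [l r W1 W2 B|l r W W' B _ IH] M1 M2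
  /merge_list_cat_cons_inv [l1 [i1 [r1 [l2 [i2 [r2 [-> -> Hl Hi Hr]]]]]]];
  have [V1 [V2 [-> -> HV]]] := merge_item_br_inv Hi.
- have [u1 [j1 [v1 [u2 [j2 [v2 [-> -> Hu Hj Hv]]]]]]] := merge_list_cat_cons_inv HV.
  have [T1 [T2 [-> -> ->]]] := merge_item_dia_inv Hj.
  exists T1, T2, (l1 ++ IDia a T1 :: IBr (u1 ++ v1) B :: r1),
    (l2 ++ IDia a T2 :: IBr (u2 ++ v2) B :: r2).
  split; try exact: dia_lift_here.
  apply: merge_list_cat => //; apply: MCons; first exact: MDia.
  by apply: MCons => //; apply/MBr/merge_list_cat.
- have [T1 [T2 [V1' [V2' [H1 H2 HV']]]]] := IH _ _ HV.
  exists T1, T2, (l1 ++ IBr V1' B :: r1), (l2 ++ IBr V2' B :: r2).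
  split; try exact: dia_lift_deep.
  by apply: merge_list_cat => //; apply: MCons => //; apply: MBr.
Qed.

Lemma ctx_dia_drop_merge a T c c' c1 c2 : ctx_dia_drop a T c c' -> merge_ctx c1 c2 c ->
  exists T1 T2 c1' c2', [/\ T = T1 `|` T2, ctx_dia_drop a T1 c1 c1', ctx_dia_drop a T2 c2 c2'
    & merge_ctx c1' c2' c'].
Proof.
case=> [Y1 Y2 /merge_ctx_hole_inv [Z1 [Z2 [-> -> HZ]]]|Y1 Y2 c0 B
  /merge_ctx_br_inv [Z1 [Z2 [c3 [c4 [-> -> HZ Hc]]]]]];
  have [u1 [j1 [v1 [u2 [j2 [v2 [-> -> Hu Hj Hv]]]]]]] := merge_list_cat_cons_inv HZ;
  have [T1 [T2 [-> -> ->]]] := merge_item_dia_inv Hj.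
- exists T1, T2, (Hole (u1 ++ v1)), (Hole (u2 ++ v2)).
  by split=> //; try exact: ctx_dia_drop_hole; apply/MHole/merge_list_cat.
- exists T1, T2, (CBr (u1 ++ v1) c3 B), (CBr (u2 ++ v2) c4 B).
  by split=> //; try exact: ctx_dia_drop_br; apply: MCBr => //; apply: merge_list_cat.
Qed.

Lemma ctx_dia_lift_merge a T G G' G1 G2 : ctx_dia_lift a T G G' -> merge_ctx G1 G2 G ->
  exists T1 T2 G1' G2',
    [/\ ctx_dia_lift a T1 G1 G1', ctx_dia_lift a T2 G2 G2' & merge_ctx G1' G2' G'].
Proof.
move=> H; elim: H G1 G2 => [Y Y' HY|Y Y' c B HY|Y c c' B _ IH|Y c c' B Hc] G1 G2.
- case/merge_ctx_hole_inv=> [Z1 [Z2 [-> -> /(dia_lift_merge HY) [T1 [T2 [Z1' [Z2' [H1 H2 H3]]]]]]]].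
  by exists T1, T2, (Hole Z1'), (Hole Z2'); split; constructor.
- case/merge_ctx_br_inv=> [Z1 [Z2 [c1 [c2 [-> -> /(dia_lift_merge HY)
    [T1 [T2 [Z1' [Z2' [H1 H2 H3]]]]] H4]]]]].
  by exists T1, T2, (CBr Z1' c1 B), (CBr Z2' c2 B); split; constructor.
- case/merge_ctx_br_inv=> [Z1 [Z2 [c1 [c2 [-> -> H3 /IH [T1 [T2 [c1' [c2' [H1 H2 H4]]]]]]]]]].
  by exists T1, T2, (CBr Z1 c1' B), (CBr Z2 c2' B); split; constructor.
- case/merge_ctx_br_inv=> [Z1 [Z2 [c1 [c2 [-> -> H3 /(ctx_dia_drop_merge Hc)
    [T1 [T2 [c1' [c2' [-> H1 H2 H4]]]]]]]]]].
  exists T1, T2, (CBr (Z1 ++ [:: IDia a T1]) c1' B), (CBr (Z2 ++ [:: IDia a T2]) c2' B).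
  split; try exact: ctx_dia_lift_out.
  by apply: MCBr => //; apply: merge_list_cat => //; apply: MCons; [apply: MDia|apply: MNil].
Qed.

Lemma deriv_dia_raised cf A S S' B D D' G G1 G2 :
  ctx_dia_raise A S G G1 -> ctx_dia_raise A (S `|` [fset B]) G G2 ->
  deriv cf (fill G1 (fill D [:: IBr (rcons D' (fitem A S')) B])) ->
  deriv cf (fill G2 (fill D [:: IBr D' B])).
Proof.
move=> HG1 HG2; rewrite -[fill G1 _]/(fill (Hole [::]) _) -[fill G2 _]/(fill (Hole [::]) _).
elim: HG1 (Hole [::]) G2 HG2 => [Y Y' B0|Y c c' B0 Hc IH] K G2 HG2.
- inversion HG2 as [|? ? ? ? Hc2]; subst; last by inversion Hc2.
  have EY Z : rcons Y (IBr (Y' ++ fill D Z) B0) = fill (CBr Y (ctx_comp (Hole Y') D) B0) Z.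
    by rewrite /= fill_ctx_comp cats1.
  rewrite /= !cats1 => /R_exch /(_ (Permutation_rcons_swap _ _ _)).
  rewrite EY => /R_dia /R_exch; rewrite -EY; apply; exact: Permutation_rcons_swap.
- inversion HG2 as [|? ? c2 ? Hc2]; subst; first by inversion Hc.
  by rewrite /= !fill_br_ctx_comp; apply: IH.
Qed.

Definition dia_lift_closed cf (s : sequent) : Prop :=
  forall a T t, dia_lift a T s t -> deriv cf t.

Lemma dia_lift_closed_exch cf G D D' :
  dia_lift_closed cf (fill G D) -> Permutation D D' -> dia_lift_closed cf (fill G D').
Proof.
move=> IH HD a T t /dia_lift_fill_inv [[G' HG ->]|[P' HP ->]|[G' [P1 [P2 [HG ED' ->]]]]].
- exact: R_exch (IH _ _ _ (dia_lift_ctx _ HG)) HD.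
- have [D0 HD0 HP0] := dia_lift_perm HD HP.
  exact: R_exch (IH _ _ _ (dia_lift_fill _ HD0)) HP0.
- subst D'; have [Q1 [Q2 [ED HQ]]] := Permutation_cat_cons_inv HD; subst D.
  exact: R_exch (IH _ _ _ (dia_lift_raise _ _ HG)) HQ.
Qed.

Lemma dia_lift_closed_dia cf G D D' A B S S' :
  dia_lift_closed cf (fill G (rcons (fill D [:: IBr (rcons D' (fitem A S')) B]) (IDia A S))) ->
  dia_lift_closed cf (fill G (rcons (fill D [:: IBr D' B]) (IDia A (S `|` [fset B])))).
Proof.
move=> IH a T t /dia_lift_fill_inv [[G' HG ->]|[P' HP ->]|[G' [P1 [P2 [HG EP ->]]]]].
- by apply: R_dia; apply: IH; apply: dia_lift_ctx HG.
- have [X' /dia_lift_fill_br_inv [D2 [W2 [-> HX]]] ->] := dia_lift_rcons_dia_inv HP.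
  by apply: R_dia; apply: IH; apply/dia_lift_fill/dia_lift_rcons/HX.
case/lastP: P2 EP => [|P2 y].
- (* the moved formula is the principal formula of the rule *)
  rewrite cats1 cats0 => /rcons_inj [EX Ea ET]; subst a T P1.
  have [G1 HG1] := ctx_dia_raise_reannotate S HG.
  apply: (deriv_dia_raised (S' := S') HG1 HG); apply: (IH A S).
  have := dia_lift_raise (fill D [:: IBr (rcons D' (fitem A S')) B]) [::] HG1.
  by rewrite cats0 cats1.
- rewrite -rcons_cons -rcons_cat => /rcons_inj [EX <-].
  have [Dm HDm EDm] := fill_br_eq_cat_dia EX.
  rewrite -rcons_cat -EDm; apply: (R_dia (S' := S')); apply: (IH a T).
  have [W1 [W2 [-> ->]]] := ctx_dia_drop_fill [:: IBr (rcons D' (fitem A S')) B] HDm.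
  by rewrite !rcons_cat; apply: dia_lift_raise.
Qed.

Lemma deriv_dia_lift cf s : deriv cf s -> dia_lift_closed cf s.
Proof.
elim=> {s} [G D D' _ IH HD|G n HE|G1 G2 G A B S1 S2 Hm _ IH1 _ IH2|G A B S1 S2 _ IH
  |G A S S' _ IH|G D D' A B S S' _ IH|G1 G2 G S1 S2 Hm _ IH1 _ IH2].
- exact: dia_lift_closed_exch IH HD.
- move=> a T t /dia_lift_fill_flat [//|G' HG ->].
  exact/R_id/(ctx_dia_lift_empty HG HE).
- move=> a T t /dia_lift_fill_flat [//|G' HG ->].
  have [T1 [T2 [G1' [G2' [HG1 HG2 Hm']]]]] := ctx_dia_lift_merge HG Hm.
  exact: R_and Hm' (IH1 _ _ _ (dia_lift_ctx _ HG1)) (IH2 _ _ _ (dia_lift_ctx _ HG2)).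
- move=> a T t /dia_lift_fill_flat [//|G' HG ->].
  exact/R_or/IH/dia_lift_ctx/HG.
- move=> a T t /dia_lift_fill_flat [//|G' HG ->].
  exact/R_box/IH/dia_lift_ctx/HG.
- exact: dia_lift_closed_dia IH.
- move=> a T t /dia_lift_fill_flat [//|G' HG ->].
  have [T1 [T2 [G1' [G2' [HG1 HG2 Hm']]]]] := ctx_dia_lift_merge HG Hm.
  exact: R_cut Hm' (IH1 _ _ _ (dia_lift_ctx _ HG1)) (IH2 _ _ _ (dia_lift_ctx _ HG2)).
Qed.

Lemma deriv_dia_out_of_ctx cf a T D G :
  deriv cf (fill G (fill D [:: IDia a T])) -> deriv cf (fill G (rcons (fill D [::]) (IDia a T))).
Proof.
elim: D G => [X|X c IH B] G /=; first by rewrite cats0 cats1.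
rewrite fill_br_ctx_comp => /IH; rewrite -fill_br_ctx_comp -cats1 => Hd.
have := deriv_dia_lift Hd (dia_lift_fill G (dia_lift_here a T X [::] (fill c [::]) [::] B)).
rewrite cats0 rcons_cat => /R_exch; apply.
by apply: Permutation_app_head; apply: perm_swap.
Qed.

Fixpoint sim_item_refl (i : item) : sim_item i i :=
  match i with
  | IForm C p => SForm p
  | IDia F Sg => SDia F Sg Sg
  | IBr D B => SBr B ((fix sim_list_refl (l : sequent) : sim_list l l :=
      if l is x :: l' then SCons (sim_item_refl x) (sim_list_refl l') else SNil) D)
  end.

Lemma sim_list_refl (l : sequent) : sim_list l l.
Proof. by elim: l => [|x l IH]; constructor=> //; apply: sim_item_refl. Qed.

Lemma sim_ctx_refl (c : ctx) : sim_ctx c c.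
Proof. by elim: c => [Y|Y c IH B]; constructor=> //; apply: sim_list_refl. Qed.

Theorem mainTheorem5 (A : form) (G D : ctx) (S : {fset form}) :
  deriv A (fill G (fill D [:: IDia (neg A) S])) ->
  exists G' D', sim_ctx G G' /\ sim_ctx D D' /\
    deriv A (fill G' (rcons (fill D' [::]) (IDia (neg A) S))).
Proof.
move=> HD; exists G, D; split; first exact: sim_ctx_refl.
by split; [exact: sim_ctx_refl|exact: deriv_dia_out_of_ctx].
Qed.
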